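(* For every integer $g\geq 1$ there exist a connected graph $G$ and a connected spanning subgraph $H$ of $G$, both having $R_g$-cutsets, such that $\kappa_g(G)=1$ and $\kappa_g(H)=2$; in particular $\kappa_g(H)>\kappa_g(G)$. Concretely: let $X_1,X_2,Y_1,Y_2$ be four vertex-disjoint cliques, each with at least $g+1$ vertices, and let $u,v,w$ be three further vertices; $G$ is obtained by joining $u$ to every vertex of $X_1\cup X_2\cup Y_1\cup Y_2$, joining each of $v$ and $w$ to every vertex of $Y_1\cup Y_2$, and adding the edges $uv,uw$; $H$ is obtained from $G$ by deleting all edges inside $X_1$ and inside $X_2$, all edges between $u$ and $Y_1$, and the edges $uv,uw$.
   Context: All graphs are finite and simple. A set $S\subseteq V(G)$ is a cutset if $G-S$ is disconnected. For a non-negative integer $g$, a cutset $S$ is an $R_g$-cutset if every connected component of $G-S$ has at least $g+1$ vertices. If $G$ has at least one $R_g$-cutset, the $g$-extra connectivity $\kappa_g(G)$ is the minimum cardinality of an $R_g$-cutset of $G$. A spanning subgraph of $G$ is a subgraph with vertex set $V(G)$. *)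

From mathcomp Require Import all_boot.
Set Implicit Arguments. Unset Strict Implicit. Unset Printing Implicit Defensive.

Definition simple_graph (T : finType) (e : rel T) : Prop :=
  irreflexive e /\ symmetric e.

Definition connected_graph (T : finType) (e : rel T) : Prop :=
  forall x y : T, connect e x y.

Definition spanning_subgraph (T : finType) (f e : rel T) : Prop :=
  forall x y : T, f x y -> e x y.

Definition del_rel (T : finType) (e : rel T) (S : {set T}) : rel T :=
  fun x y => [&& x \notin S, y \notin S & e x y].

Definition comp_del (T : finType) (e : rel T) (S : {set T}) (x : T) : {set T} :=
  [set y | (y \notin S) && connect (del_rel e S) x y].

Definition cutset (T : finType) (e : rel T) (S : {set T}) : bool :=
  [exists x, exists y,
     [&& x \notin S, y \notin S & ~~ connect (del_rel e S) x y]].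

Definition Rg_cutset (T : finType) (e : rel T) (g : nat) (S : {set T}) : bool :=
  cutset e S && [forall x, (x \notin S) ==> (g < #|comp_del e S x|)].

Definition has_Rg_cutset (T : finType) (e : rel T) (g : nat) : Prop :=
  exists S : {set T}, Rg_cutset e g S.

(* g-extra connectivity: minimum cardinality of an R_g-cutset (meaningful
   when one exists; the default #|T| is never attained by a cutset). *)
Definition kappa_g (T : finType) (e : rel T) (g : nat) : nat :=
  \big[minn/#|T|]_(S : {set T} | Rg_cutset e g S) #|S|.

Definition symclos (T : finType) (b : rel T) : rel T :=
  fun x y => (x != y) && (b x y || b y x).

Definition G_base (T : finType) (X1 X2 Y1 Y2 : {set T}) (u v w : T) : rel T :=
  fun x y =>
    [|| (x \in X1) && (y \in X1),
        (x \in X2) && (y \in X2),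
        (x \in Y1) && (y \in Y1),
        (x \in Y2) && (y \in Y2),
        (x == u) && (y \in X1 :|: X2 :|: Y1 :|: Y2),
        ((x == v) || (x == w)) && (y \in Y1 :|: Y2)
      | (x == u) && ((y == v) || (y == w))].

Definition G_rel (T : finType) (X1 X2 Y1 Y2 : {set T}) (u v w : T) : rel T :=
  symclos (G_base X1 X2 Y1 Y2 u v w).

Definition H_base (T : finType) (X1 X2 Y1 Y2 : {set T}) (u v w : T) : rel T :=
  fun x y =>
    [|| (x \in Y1) && (y \in Y1),
        (x \in Y2) && (y \in Y2),
        (x == u) && (y \in X1 :|: X2 :|: Y2)
      | ((x == v) || (x == w)) && (y \in Y1 :|: Y2)].

Definition H_rel (T : finType) (X1 X2 Y1 Y2 : {set T}) (u v w : T) : rel T :=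
  symclos (H_base X1 X2 Y1 Y2 u v w).

From mathcomp Require Import all_boot.
Set Implicit Arguments. Unset Strict Implicit. Unset Printing Implicit Defensive.

(* Deleting u from G separates the cliques X1 and X2 from the rest, whose
   components all contain a clique, so kappa_g G = 1.  In H the vertex u is a
   hub for X1, X2 and Y2, and Y1, v, w reach it through Y2; hence deleting a
   single vertex other than u leaves H connected, while deleting u isolates
   the vertices of X1, whose only neighbour it is.  So H has no R_g-cutset of
   size 1, and {v, w}, which cuts off the clique Y1, is one of size 2. *)

Lemma geq_bigmin_cond (I : finType) (P : pred I) (F : I -> nat) x j :
  P j -> \big[minn/x]_(i | P i) F i <= F j.
Proof.
have := mem_index_enum j; rewrite unlock; elim: (index_enum I) => //= i r IHr.
rewrite inE => /orP[/eqP<- ->|/IHr le_j Pj]; first exact: geq_minl.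
by case: ifP => _; [apply: leq_trans (geq_minr _ _) _|]; exact: le_j.
Qed.

Lemma exists_outside (T : finType) (A S : {set T}) :
  #|S| < #|A| -> exists2 a, a \in A & a \notin S.
Proof.
move=> ltSA; apply/exists_inP; apply: contraTT ltSA => /exists_inPn AS.
by rewrite -leqNgt subset_leq_card //; apply/subsetP => a /AS /negPn.
Qed.

Lemma connect_closed (T : finType) (e : rel T) (P : pred T) :
  (forall x y, P x -> e x y -> P y) -> forall x y, connect e x y -> P x -> P y.
Proof.
move=> closedP x y /connectP[p ep ->] {y}.
by elim: p x ep => //= z p IHp x /andP[exz ep] Px; exact: IHp ep (closedP _ _ Px exz).
Qed.

Lemma symclos_simple (T : finType) (b : rel T) : simple_graph (symclos b).
Proof. by split=> [x|x y]; rewrite /symclos ?eqxx // eq_sym orbC. Qed.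

Section DeleteVertices.

Variables (T : finType) (e : rel T).
Implicit Types (S A : {set T}) (x y : T).

Lemma del_rel_sym S : symmetric e -> symmetric (del_rel e S).
Proof. by move=> esym x y; rewrite /del_rel esym andbCA. Qed.

Lemma connect_del_edge S x y :
  x \notin S -> y \notin S -> e x y -> connect (del_rel e S) x y.
Proof. by move=> xS yS exy; apply: connect1; rewrite /del_rel xS yS. Qed.

Lemma connect_del_sub (f : rel T) S x y :
  subrel f e -> connect (del_rel f S) x y -> connect (del_rel e S) x y.
Proof.
move=> fe; apply: connect_sub => a b /and3P[aS bS fab].
exact: connect_del_edge aS bS (fe _ _ fab).
Qed.

Lemma connect_del_clique S A x y :
  {in A &, forall a b, a != b -> e a b} ->
  x \in A -> y \in A -> x \notin S -> y \notin S -> connect (del_rel e S) x y.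
Proof.
move=> cliqueA xA yA xS yS; have [->|xy] := eqVneq x y; first exact: connect0.
exact: connect_del_edge xS yS (cliqueA _ _ xA yA xy).
Qed.

Lemma connect_del_hub S c x y :
  symmetric e -> connect (del_rel e S) x c -> connect (del_rel e S) y c ->
  connect (del_rel e S) x y.
Proof.
move=> esym xc yc; apply: connect_trans xc _.
by rewrite (sym_connect_sym (del_rel_sym S esym)).
Qed.

Lemma leq_card_comp_del S A x :
  (forall y, y \in A -> y \notin S /\ connect (del_rel e S) x y) ->
  #|A| <= #|comp_del e S x|.
Proof.
move=> reachA; apply/subset_leq_card/subsetP => y /reachA[yS xy].
by rewrite inE yS.
Qed.

Lemma leq_card_comp_del_clique S A x :
  {in A &, forall a b, a != b -> e a b} -> {in A, forall a, a \notin S} ->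
  x \in A -> #|A| <= #|comp_del e S x|.
Proof.
move=> cliqueA AS xA; apply: leq_card_comp_del => y yA; split; first exact: AS.
exact: connect_del_clique cliqueA xA yA (AS x xA) (AS y yA).
Qed.

Lemma connect_of_del S x y : connect (del_rel e S) x y -> connect e x y.
Proof. by apply: connect_sub => a b /and3P[_ _ /connect1]. Qed.

Lemma comp_del_isolated S x :
  x \notin S -> (forall z, e x z -> z \in S) -> comp_del e S x = [set x].
Proof.
move=> xS nbhS; apply/setP => y; rewrite !inE.
apply/andP/eqP => [[_ xy]|->]; last by rewrite xS connect0.
apply/eqP; apply: (connect_closed (P := pred1 x)) xy (eqxx x) => a b /eqP-> /and3P[_ bS exb].
by rewrite nbhS in bS.
Qed.

Lemma cutset_closed S A a b :
  (forall x y, x \in A -> x \notin S -> y \notin S -> e x y -> y \in A) ->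
  a \in A -> b \notin A -> a \notin S -> b \notin S -> cutset e S.
Proof.
move=> closedA aA bA aS bS; apply/existsP; exists a; apply/existsP; exists b.
rewrite aS bS /=; apply: contra bA => ab.
apply: (connect_closed (P := mem A)) ab aA => x y xA /and3P[xS yS]; exact: closedA.
Qed.

Lemma cutsetN S :
  (forall x y, x \notin S -> y \notin S -> connect (del_rel e S) x y) ->
  ~~ cutset e S.
Proof.
move=> connS; apply/existsP => [[x /existsP[y /and3P[xS yS]]]].
by rewrite connS.
Qed.

Lemma connected_cutset_gt0 S : connected_graph e -> cutset e S -> 0 < #|S|.
Proof.
move=> conn_e; rewrite lt0n cards_eq0; apply: contraL => /eqP->.
apply: cutsetN => x y _ _; apply: connect_sub (conn_e x y) => a b eab.
by apply: connect_del_edge; rewrite ?inE.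
Qed.

Lemma Rg_cutsetN_isolated g S x :
  0 < g -> x \notin S -> (forall z, e x z -> z \in S) -> ~~ Rg_cutset e g S.
Proof.
move=> g_gt0 xS nbhS; apply/andP => [[_ /forallP/(_ x)]].
by rewrite xS comp_del_isolated // cards1 ltnS leqNgt g_gt0.
Qed.

Lemma kappa_gE g S0 :
  Rg_cutset e g S0 -> (forall S, Rg_cutset e g S -> #|S0| <= #|S|) ->
  kappa_g e g = #|S0|.
Proof.
move=> RS0 minS0; apply/eqP; rewrite eqn_leq geq_bigmin_cond //=.
by apply: (big_ind (leq #|S0|)) => // [|m n]; rewrite ?max_card // leq_min => ->.
Qed.

End DeleteVertices.

Section Construction.

Variables (T : finType) (X1 X2 Y1 Y2 : {set T}) (u v w : T).
Hypotheses (d12 : [disjoint X1 & X2]) (d13 : [disjoint X1 & Y1])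
  (d14 : [disjoint X1 & Y2]) (d23 : [disjoint X2 & Y1])
  (d24 : [disjoint X2 & Y2]) (d34 : [disjoint Y1 & Y2]).
Hypotheses (hu : u \notin X1 :|: X2 :|: Y1 :|: Y2)
  (hv : v \notin X1 :|: X2 :|: Y1 :|: Y2) (hw : w \notin X1 :|: X2 :|: Y1 :|: Y2).
Hypotheses (huv : u != v) (huw : u != w) (hvw : v != w).
Hypothesis hcover : forall x, x \in X1 :|: X2 :|: Y1 :|: Y2 :|: [set u; v; w].

Local Notation G := (G_rel X1 X2 Y1 Y2 u v w).
Local Notation H := (H_rel X1 X2 Y1 Y2 u v w).

(* The seven parts partition the vertices: casing on [vertexP x] evaluates
   every membership test on x at once. *)
Variant vertex_spec x : bool -> bool -> bool -> bool -> bool -> bool -> bool -> Prop :=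
  | VertexX1 of x \in X1 : vertex_spec x true false false false false false false
  | VertexX2 of x \in X2 : vertex_spec x false true false false false false false
  | VertexY1 of x \in Y1 : vertex_spec x false false true false false false false
  | VertexY2 of x \in Y2 : vertex_spec x false false false true false false false
  | VertexU of x = u : vertex_spec x false false false false true false false
  | VertexV of x = v : vertex_spec x false false false false false true false
  | VertexW of x = w : vertex_spec x false false false false false false true.

Lemma vertexP x :
  vertex_spec x (x \in X1) (x \in X2) (x \in Y1) (x \in Y2) (x == u) (x == v) (x == w).
Proof.
have outside t : t \notin X1 :|: X2 :|: Y1 :|: Y2 ->
    [/\ t \in X1 = false, t \in X2 = false, t \in Y1 = false & t \in Y2 = false].
  by rewrite !inE !negb_or => /andP[/andP[/andP[/negbTE-> /negbTE->] /negbTE->] /negbTE->].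
have [xU|xU] := boolP (x \in X1 :|: X2 :|: Y1 :|: Y2).
  have neq t : t \notin X1 :|: X2 :|: Y1 :|: Y2 -> (x == t) = false.
    by move=> tU; apply: contraNF tU => /eqP<-.
  rewrite !neq //; move: xU; rewrite !inE => /orP[/orP[/orP[]|]|] xA.
  - by rewrite xA (disjointFr d12 xA) (disjointFr d13 xA) (disjointFr d14 xA); constructor.
  - by rewrite xA (disjointFl d12 xA) (disjointFr d23 xA) (disjointFr d24 xA); constructor.
  - by rewrite xA (disjointFl d13 xA) (disjointFl d23 xA) (disjointFr d34 xA); constructor.
  - by rewrite xA (disjointFl d14 xA) (disjointFl d24 xA) (disjointFl d34 xA); constructor.
have [-> -> -> ->] := outside x xU.
move: (hcover x); rewrite in_setU (negbTE xU) !inE /=.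
have [vu wu wv] : [/\ (v == u) = false, (w == u) = false & (w == v) = false].
  by rewrite (eq_sym v u) (eq_sym w u) (eq_sym w v); split; apply/negbTE.
by case/orP=> [/orP[]|] /eqP->;
  rewrite eqxx ?(negbTE huv) ?(negbTE huw) ?(negbTE hvw) ?vu ?wu ?wv; constructor.
Qed.

Local Ltac vertex_cases x := case: (vertexP x) => _.

(* In [symclos], the test [x != y] is the only one not determined by the
   parts of x and y, whence the preliminary split. *)
Local Ltac edge_cases x y :=
  rewrite /G_rel /H_rel /symclos /G_base /H_base !inE;
  have [xy|_] := eqVneq x y;
  [subst y; vertex_cases x | vertex_cases x; vertex_cases y].

Lemma H_sub_G : spanning_subgraph H G.
Proof. by move=> x y; edge_cases x y. Qed.

Lemma H_uE x : H u x = [|| x \in X1, x \in X2 | x \in Y2].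
Proof.
(* The hypothesis [u == u] rules out the cases of [vertexP u] other than u. *)
by move: (eqxx u); edge_cases u x.
Qed.

Lemma H_vwE t x : (t == v) || (t == w) -> H t x = (x \in Y1) || (x \in Y2).
Proof. by edge_cases t x. Qed.

Lemma H_X1E x z : x \in X1 -> H x z = (z == u).
Proof. by edge_cases x z. Qed.

Lemma H_Y1E x z : x \in Y1 -> H x z = (x != z) && [|| z \in Y1, z == v | z == w].
Proof. by edge_cases x z. Qed.

Lemma G_X1E x z : x \in X1 -> G x z = (x != z) && (z \in X1) || (z == u).
Proof. by edge_cases x z. Qed.

Lemma G_X2E x z : x \in X2 -> G x z = (x != z) && (z \in X2) || (z == u).
Proof. by edge_cases x z. Qed.


Lemma H_sym : symmetric H.
Proof. exact: (symclos_simple _).2. Qed.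

Lemma notin_u z : z \in X1 :|: X2 :|: Y1 :|: Y2 -> z \notin [set u].
Proof. by move=> zU; rewrite inE; apply: contraNneq hu => <-. Qed.

Lemma notin_vw z : z \in X1 :|: X2 :|: Y1 :|: Y2 -> z \notin [set v; w].
Proof.
move=> zU; rewrite !inE negb_or.
by apply/andP; split; [apply: contraNneq hv | apply: contraNneq hw] => <-.
Qed.

Lemma connect_H_del (S : {set T}) x y :
  1 < #|Y2| -> u \notin S -> #|S| <= 1 -> x \notin S -> y \notin S ->
  connect (del_rel H S) x y.
Proof.
move=> Y2_gt1 uS S_le1.
have [y2 y2Y2 y2S] := exists_outside (leq_ltn_trans S_le1 Y2_gt1).
have [t tvw tS] : exists2 t, t \in [set v; w] & t \notin S.
  by apply: exists_outside; rewrite cards2 hvw.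
have {}tvw : (t == v) || (t == w) by rewrite !inE in tvw.
have y2_u : connect (del_rel H S) y2 u.
  by apply: connect_del_edge; rewrite // H_sym H_uE y2Y2 !orbT.
have vw_u s : (s == v) || (s == w) -> s \notin S -> connect (del_rel H S) s u.
  move=> svw sS; apply: connect_trans y2_u.
  by apply: connect_del_edge; rewrite // H_vwE // y2Y2 orbT.
suff to_u z : z \notin S -> connect (del_rel H S) z u.
  by move=> xS yS; apply: connect_del_hub H_sym (to_u x xS) (to_u y yS).
case: (vertexP z) => [zX|zX|zY|zY|->|->|->] zS.
- by apply: connect_del_edge; rewrite // H_sym H_uE zX.
- by apply: connect_del_edge; rewrite // H_sym H_uE zX orbT.
- apply: connect_trans (vw_u t tvw tS).
  by apply: connect_del_edge; rewrite // H_sym H_vwE // zY.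
- by apply: connect_del_edge; rewrite // H_sym H_uE zY !orbT.
- exact: connect0.
- by apply: vw_u; rewrite ?eqxx.
- by apply: vw_u; rewrite ?eqxx ?orbT.
Qed.

Lemma connect_H_del_u x y :
  0 < #|Y1| -> x \in Y1 :|: Y2 :|: [set v; w] -> y \in Y1 :|: Y2 :|: [set v; w] ->
  connect (del_rel H [set u]) x y.
Proof.
move=> Y1_gt0; have [y1 y1Y1] := card_gt0P Y1_gt0.
have Yu z : (z \in Y1) || (z \in Y2) -> z \notin [set u].
  by move=> zY; apply: notin_u; rewrite !inE -orbA zY orbT.
have vu : v \notin [set u] by rewrite inE eq_sym.
have wu : w \notin [set u] by rewrite inE eq_sym.
have to_v z : z \in Y1 :|: Y2 :|: [set v; w] -> connect (del_rel H [set u]) z v.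
  rewrite !inE => /or3P[zY|/eqP->|/eqP->].
  - by apply: connect_del_edge (Yu z zY) vu _; rewrite H_sym H_vwE ?eqxx.
  - exact: connect0.
  have y1Y : (y1 \in Y1) || (y1 \in Y2) by rewrite y1Y1.
  apply: (connect_trans (connect_del_edge wu (Yu y1 y1Y) _)).
    by rewrite H_vwE ?eqxx ?orbT.
  by apply: connect_del_edge (Yu y1 y1Y) vu _; rewrite H_sym H_vwE ?eqxx.
by move=> xY yY; apply: connect_del_hub H_sym (to_v x xY) (to_v y yY).
Qed.

Lemma connect_H_del_vw x y :
  x \in X1 :|: X2 :|: Y2 :|: [set u] -> y \in X1 :|: X2 :|: Y2 :|: [set u] ->
  connect (del_rel H [set v; w]) x y.
Proof.
have uS : u \notin [set v; w] by rewrite !inE negb_or huv huw.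
have to_u z : z \in X1 :|: X2 :|: Y2 :|: [set u] -> connect (del_rel H [set v; w]) z u.
  rewrite !inE => /orP[zX|/eqP->]; last exact: connect0.
  apply: connect_del_edge uS _; last by rewrite H_sym H_uE orbA.
  by apply: notin_vw; case/orP: zX => [/orP[]|] zA; rewrite !inE zA ?orbT.
by move=> xA yA; apply: connect_del_hub H_sym (to_u x xA) (to_u y yA).
Qed.

Lemma connected_H : 1 < #|Y2| -> connected_graph H.
Proof.
move=> Y2_gt1 x y; apply: (@connect_of_del _ _ set0).
by apply: connect_H_del; rewrite ?inE ?cards0.
Qed.

Lemma connected_G : 1 < #|Y2| -> connected_graph G.
Proof.
move=> Y2_gt1 x y; apply: connect_sub (connected_H Y2_gt1 x y) => a b Hab.
exact/connect1/H_sub_G.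
Qed.

Section Cutsets.

Variable g : nat.
Hypotheses (g_gt0 : 0 < g) (hX1 : g < #|X1|) (hX2 : g < #|X2|)
  (hY1 : g < #|Y1|) (hY2 : g < #|Y2|).

Let Y1_gt0 : 0 < #|Y1| := leq_ltn_trans (leq0n g) hY1.
Let Y2_gt1 : 1 < #|Y2| := leq_ltn_trans g_gt0 hY2.

Lemma Rg_cutset_G_u : Rg_cutset G g [set u].
Proof.
have S_lt (A : {set T}) : g < #|A| -> #|[set u]| < #|A| by rewrite cards1; exact: leq_ltn_trans.
apply/andP; split.
  have [a aX1 aS] := exists_outside (S_lt _ hX1).
  have [b bX2 bS] := exists_outside (S_lt _ hX2).
  apply: (cutset_closed _ aX1 (negbT (disjointFl d12 bX2)) aS bS) => x z xX1 _.
  by rewrite inE G_X1E // => /negbTE->; rewrite orbF => /andP[].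
have Y1_comp x : x \in Y1 :|: Y2 :|: [set v; w] -> g < #|comp_del G [set u] x|.
  move=> xY; apply: leq_trans hY1 (leq_card_comp_del _) => y yY1; split.
    by apply: notin_u; rewrite !inE yY1 !orbT.
  apply: connect_del_sub H_sub_G (connect_H_del_u Y1_gt0 xY _).
  by rewrite !inE yY1.
apply/forallP => x; apply/implyP; case: (vertexP x) => [xX|xX|xY|xY|->|->|->] xS.
- apply: leq_trans hX1 (leq_card_comp_del_clique _ _ xX) => [a b aX bX ab|a aX].
    by rewrite G_X1E // ab bX.
  by apply: notin_u; rewrite !inE aX.
- apply: leq_trans hX2 (leq_card_comp_del_clique _ _ xX) => [a b aX bX ab|a aX].
    by rewrite G_X2E // ab bX.
  by apply: notin_u; rewrite !inE aX !orbT.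
- by apply: Y1_comp; rewrite !inE xY.
- by apply: Y1_comp; rewrite !inE xY orbT.
- by rewrite inE eqxx in xS.
- by apply: Y1_comp; rewrite !inE eqxx !orbT.
- by apply: Y1_comp; rewrite !inE eqxx !orbT.
Qed.

Lemma Rg_cutset_H_vw : Rg_cutset H g [set v; w].
Proof.
have [a aY1] := card_gt0P Y1_gt0.
have aS : a \notin [set v; w] by apply: notin_vw; rewrite !inE aY1 !orbT.
have uS : u \notin [set v; w] by rewrite !inE negb_or huv huw.
have uY1 : u \notin Y1 by apply: contra hu => uY1; rewrite !inE uY1 !orbT.
apply/andP; split.
  apply: (cutset_closed _ aY1 uY1 aS uS) => x z xY1 _.
  by rewrite !inE negb_or H_Y1E // => /andP[/negbTE-> /negbTE->] /andP[_]; rewrite !orbF.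
have Y2_comp x : x \in X1 :|: X2 :|: Y2 :|: [set u] -> g < #|comp_del H [set v; w] x|.
  move=> xA; apply: leq_trans hY2 (leq_card_comp_del _) => y yY2; split.
    by apply: notin_vw; rewrite !inE yY2 !orbT.
  by apply: connect_H_del_vw xA _; rewrite !inE yY2 !orbT.
apply/forallP => x; apply/implyP; case: (vertexP x) => [xX|xX|xY|xY|->|->|->] xS.
- by apply: Y2_comp; rewrite !inE xX.
- by apply: Y2_comp; rewrite !inE xX !orbT.
- apply: leq_trans hY1 (leq_card_comp_del_clique _ _ xY) => [y z yY zY yz|y yY].
    by rewrite H_Y1E // yz zY.
  by apply: notin_vw; rewrite !inE yY !orbT.
- by apply: Y2_comp; rewrite !inE xY !orbT.
- by apply: Y2_comp; rewrite !inE eqxx !orbT.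
- by rewrite !inE eqxx in xS.
- by rewrite !inE eqxx orbT in xS.
Qed.

Lemma kappa_G : kappa_g G g = 1.
Proof.
rewrite -(cards1 u); apply: kappa_gE Rg_cutset_G_u _ => S /andP[cutS _].
by rewrite cards1; apply: connected_cutset_gt0 (connected_G Y2_gt1) cutS.
Qed.

Lemma kappa_H : kappa_g H g = 2.
Proof.
have ->: 2 = #|[set v; w]| by rewrite cards2 hvw.
apply: kappa_gE Rg_cutset_H_vw _ => S RS; rewrite cards2 hvw ltnNge; apply/negP => S_le1.
have [uS|uS] := boolP (u \in S).
  have [x xX1 xS] := exists_outside (leq_ltn_trans S_le1 (leq_ltn_trans g_gt0 hX1)).
  move: RS; apply/negP; apply: Rg_cutsetN_isolated g_gt0 xS _ => z.
  by rewrite H_X1E // => /eqP->.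
case/andP: RS => cutS _; move: cutS; apply/negP; apply: cutsetN => x y.
exact: connect_H_del.
Qed.

End Cutsets.
End Construction.

Theorem mainTheorem2 (g : nat) (hg : 1 <= g)
    (T : finType) (X1 X2 Y1 Y2 : {set T}) (u v w : T)
    (hX1 : g < #|X1|) (hX2 : g < #|X2|) (hY1 : g < #|Y1|) (hY2 : g < #|Y2|)
    (d12 : [disjoint X1 & X2]) (d13 : [disjoint X1 & Y1])
    (d14 : [disjoint X1 & Y2]) (d23 : [disjoint X2 & Y1])
    (d24 : [disjoint X2 & Y2]) (d34 : [disjoint Y1 & Y2])
    (hu : u \notin X1 :|: X2 :|: Y1 :|: Y2)
    (hv : v \notin X1 :|: X2 :|: Y1 :|: Y2)
    (hw : w \notin X1 :|: X2 :|: Y1 :|: Y2)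
    (huv : u != v) (huw : u != w) (hvw : v != w)
    (hcover : forall x : T, x \in X1 :|: X2 :|: Y1 :|: Y2 :|: [set u; v; w]) :
  let G := G_rel X1 X2 Y1 Y2 u v w in
  let H := H_rel X1 X2 Y1 Y2 u v w in
  simple_graph G /\ simple_graph H /\
  connected_graph G /\ connected_graph H /\ spanning_subgraph H G /\
  has_Rg_cutset G g /\ has_Rg_cutset H g /\
  kappa_g G g = 1 /\ kappa_g H g = 2.
Proof.
move=> G H; have Y2_gt1 : 1 < #|Y2| := leq_ltn_trans hg hY2.
do 2 (split; first exact: symclos_simple).
split; first by apply: connected_G.
split; first by apply: connected_H.
split; first by apply: H_sub_G.
split; first by exists [set u]; apply: Rg_cutset_G_u.
split; first by exists [set v; w]; apply: Rg_cutset_H_vw.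
by split; [apply: kappa_G | apply: kappa_H].
Qed.
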